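(* Let $k\ge 1$, let $G=K_2\vee\overline{K_k}$, and let $v$ be a vertex of degree $2$ in $G$. If $p\ge\max\{4,\Delta(G)\}$, then $G$ is $f_{p,v}$-edge-orientable.
   Context: $G_1\vee G_2$ denotes the join: the disjoint union of $G_1$ and $G_2$ plus all edges between them. $\overline{K_k}$ is the edgeless graph on $k$ vertices. An orientation of a graph $H$ is any digraph obtained by replacing each edge $uv$ with the arc $(u,v)$, with the arc $(v,u)$, or with both arcs. A kernel of a digraph $D$ is an independent set $S$ such that every vertex of $D-S$ has an out-neighbor in $S$. $D$ is kernel-perfect if every induced subdigraph of $D$ has a kernel. For $f:V(H)\to\mathbb{N}$, an orientation $D$ of $H$ is $f$-kernel-perfect if it is kernel-perfect and $f(v)\ge 1+d^+_D(v)$ for all $v$. For $f:E(G)\to\mathbb{N}$, $G$ is $f$-edge-orientable if its line graph $L(G)$ admits an $f$-kernel-perfect orientation. For $v\in V(G)$, define $f_{p,v}:E(G)\to\mathbb{N}$ by $f_{p,v}(e)=d_G(v)$ if $e$ is incident to $v$, and $f_{p,v}(e)=p$ otherwise. *)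

From mathcomp Require Import all_boot.
Set Implicit Arguments.
Unset Strict Implicit.
Unset Printing Implicit Defensive.

Section Digraph.
Variable U : finType.

Definition is_kernel (D : rel U) (W S : {set U}) : Prop :=
  S \subset W /\
  (forall x y, x \in S -> y \in S -> ~~ D x y) /\
  (forall x, x \in W -> x \notin S -> exists2 y, y \in S & D x y).

Definition kernel_perfect (VH : {set U}) (D : rel U) : Prop :=
  forall W : {set U}, W \subset VH -> exists S : {set U}, is_kernel D W S.

Definition orientation_of (VH : {set U}) (h : rel U) (D : rel U) : Prop :=
  (forall x y, D x y -> [/\ x \in VH, y \in VH & h x y]) /\
  (forall x y, x \in VH -> y \in VH -> h x y -> D x y || D y x).

Definition outdeg (VH : {set U}) (D : rel U) (x : U) : nat :=
  #|[set y in VH | D x y]|.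

Definition f_kernel_perfect_orientation (VH : {set U}) (h : rel U)
    (f : U -> nat) (D : rel U) : Prop :=
  [/\ orientation_of VH h D, kernel_perfect VH D &
      forall x, x \in VH -> 1 + outdeg VH D x <= f x].
End Digraph.

Section Graph.
Variable T : finType.
Variable g : rel T.   (* intended symmetric and irreflexive *)

Definition deg (v : T) : nat := #|[set u | g v u]|.
Definition maxdeg : nat := \max_(u : T) deg u.

Definition edges : {set {set T}} :=
  [set A : {set T} | [exists x, exists y, g x y && (A == [set x; y])]].

Definition line_adj : rel {set T} :=
  fun A B => (A != B) && (A :&: B != set0).

Definition f_edge_orientable (f : {set T} -> nat) : Prop :=
  exists D : rel {set T}, f_kernel_perfect_orientation edges line_adj f D.

Definition f_pv (p : nat) (v : T) : {set T} -> nat :=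
  fun e => if v \in e then deg v else p.
End Graph.

(* vertices 'I_(k+2); vertices 0 and 1 form the K_2, the others are
   the independent set of size k; join edges everything with {0,1}. *)
Definition K2_join_Kbar (k : nat) : rel 'I_(k + 2) :=
  fun x y => (x != y) && ((nat_of_ord x < 2) || (nat_of_ord y < 2)).
Arguments K2_join_Kbar k : clear implicits.

(* The edges at a vertex u of G form a clique in L(G).  Orient each such clique
   by ranking the other endpoints at u, every arc pointing towards the edge
   whose other endpoint ranks higher.  The out-degree of an edge ux is then at
   most the number of neighbours ranked above x at u plus those ranked above u
   at x, and an edge that is topmost within W at both of its endpoints is a
   sink of W.
   If v is a leaf, rank v first and the hub edge second at both hubs, order the
   other leaves one way at hub0 and the opposite way at hub1, and let every leaf
   favour one of the hubs so as to balance the out-degrees of its two edges.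
   A nonempty set W of edges then has a sink unless its topmost edges at the
   two hubs are disjoint, and in that case these two edges form a kernel of W;
   removing a sink together with its in-neighbours and inducting shows that the
   orientation is kernel-perfect.  If v is a hub, then k = 1, G is a triangle,
   and ranking v above the other hub above the leaf at every vertex gives an
   acyclic orientation. *)

From mathcomp Require Import all_boot zify.

Set Implicit Arguments.
Unset Strict Implicit.
Unset Printing Implicit Defensive.

Section KernelPerfect.
Variable U : finType.
Implicit Types (D : rel U) (VH W S : {set U}).

Lemma is_kernel0 D : is_kernel D set0 set0.
Proof. by split; [exact: sub0set | split=> x; rewrite in_set0]. Qed.

Lemma is_kernel_sinkU D W S x :
  irreflexive D -> x \in W -> (forall y, y \in W -> ~~ D x y) ->
  is_kernel D [set y in W | ~~ D y x & y != x] S -> is_kernel D W (x |: S).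
Proof.
move=> Dirr xW xsink [sSW [indS absS]].
have SW y : y \in S -> [&& y \in W, ~~ D y x & y != x] by move/(subsetP sSW); rewrite inE.
split; first by rewrite subUset sub1set xW; apply/subsetP=> y /SW /andP[].
split.
  move=> y z; rewrite !inE => /predU1P[-> | yS] /predU1P[-> | zS].
  - by rewrite Dirr.
  - by apply: xsink; case/andP: (SW z zS).
  - by case/and3P: (SW y yS).
  - exact: indS.
move=> y yW; rewrite !inE negb_or => /andP[yx yS].
case Dyx: (D y x); first by exists x; rewrite ?inE ?eqxx.
have yW' : y \in [set y in W | ~~ D y x & y != x] by rewrite inE yW Dyx.
have [z zS Dyz] := absS y yW' yS.
by exists z; rewrite // inE zS orbT.
Qed.

Lemma kernel_perfect_of_sink_or_kernel VH D :
  irreflexive D ->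
  (forall W, W \subset VH -> W != set0 ->
     (exists2 x, x \in W & forall y, y \in W -> ~~ D x y) \/
     exists S, is_kernel D W S) ->
  kernel_perfect VH D.
Proof.
move=> Dirr sink_or_ker W.
elim: {W}_.+1 {-2}W (ltnSn #|W|) => // n IH W ltWn sWV.
have [-> | nzW] := eqVneq W set0; first by exists set0; exact: is_kernel0.
have [[x xW xsink] | //] := sink_or_ker W sWV nzW.
set W' := [set y in W | ~~ D y x & y != x].
have sW'W : W' \subset W by apply/subsetP=> y; rewrite inE => /andP[].
have ltW'W : #|W'| < #|W|.
  apply: proper_card; apply/properP; split=> //; exists x => //.
  by rewrite inE eqxx !andbF.
have [S kerS] := IH W' (leq_trans ltW'W ltWn) (subset_trans sW'W sWV).
by exists (x |: S); exact: is_kernel_sinkU.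
Qed.

End KernelPerfect.

Lemma set2_eq (T : finType) (a b u x : T) :
  a != b -> [set a; b] = [set u; x] -> (u = a /\ x = b) \/ (u = b /\ x = a).
Proof.
move=> ab eq_ab_ux.
have /set2P[] : u \in [set a; b] by rewrite eq_ab_ux set21.
all: have /set2P[] : x \in [set a; b] by rewrite eq_ab_ux set22.
all: have /set2P[] : a \in [set u; x] by rewrite -eq_ab_ux set21.
all: have /set2P[] : b \in [set u; x] by rewrite -eq_ab_ux set22.
all: move=> *; subst; rewrite ?eqxx in ab; by [left | right].
Qed.

Section RankOrientation.
Variables (T : finType) (g : rel T).
Hypotheses (g_sym : symmetric g) (g_irr : irreflexive g).
Variable rk : T -> T -> nat.

Lemma edges_set2 x y : ([set x; y] \in edges g) = g x y.
Proof.
apply/idP/idP => [|gxy]; last first.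
  by rewrite inE; apply/existsP; exists x; apply/existsP; exists y; rewrite gxy eqxx.
rewrite inE => /existsP[a /existsP[b /andP[gab /eqP eq_ab]]].
have ab : a != b by apply: contraTneq gab => ->; rewrite g_irr.
by have [[-> ->] | [-> ->]] := set2_eq ab (esym eq_ab); rewrite // g_sym.
Qed.

Lemma edges_at e u : e \in edges g -> u \in e -> exists2 x, g u x & e = [set u; x].
Proof.
rewrite inE => /existsP[a /existsP[b /andP[gab /eqP ->]]] /set2P[->|->].
  by exists b.
by exists a; rewrite 1?g_sym // setUC.
Qed.

Definition rank_orientation : rel {set T} := fun e f =>
  [&& e \in edges g, f \in edges g &
      [exists u, exists x, exists y,
        [&& e == [set u; x], f == [set u; y] & rk u x < rk u y]]].

Local Notation D := rank_orientation.

Lemma rank_orientationP e f :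
  reflect (exists u x y,
             [/\ g u x, g u y, e = [set u; x], f = [set u; y] & rk u x < rk u y])
          (D e f).
Proof.
apply: (iffP and3P) => [[eE fE /existsP[u /existsP[x /existsP[y]]]] | [u [x [y]]]].
  case/and3P=> /eqP ee /eqP fe lt_xy.
  by exists u, x, y; split; rewrite // -edges_set2 -?ee -?fe.
case=> gux guy ee fe lt_xy; rewrite ee fe !edges_set2; split=> //.
by apply/existsP; exists u; apply/existsP; exists x; apply/existsP; exists y; rewrite !eqxx.
Qed.

Lemma rank_orientation_irr : irreflexive D.
Proof.
move=> e; apply/negbTE/negP=> /rank_orientationP[u [x [y [gux guy -> eq_uy lt_xy]]]].
have ux : u != x by apply: contraTneq gux => ->; rewrite g_irr.
have [[_ yx] | [ux' _]] := set2_eq ux eq_uy; last by rewrite ux' eqxx in ux.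
by rewrite yx ltnn in lt_xy.
Qed.

Lemma rank_orientation_meet e f : D e f -> exists2 u, u \in e & u \in f.
Proof. by case/rank_orientationP=> u [x [y [_ _ -> -> _]]]; exists u; rewrite set21. Qed.

Lemma rank_orientation_of :
  (forall u y z, g u y -> g u z -> rk u y = rk u z -> y = z) ->
  orientation_of (edges g) (@line_adj T) D.
Proof.
move=> rk_inj; split=> [e f Def | e f eE fE /andP[ef /set0Pn[u]]].
  have /and3P[eE fE _] := Def; split=> //; apply/andP; split.
    by apply: contraTneq Def => ->; rewrite rank_orientation_irr.
  by have [u ue uf] := rank_orientation_meet Def; apply/set0Pn; exists u; rewrite inE ue.
rewrite inE => /andP[ue uf].
have [x gux ee] := edges_at eE ue; have [y guy fe] := edges_at fE uf.
have xy : x != y by apply: contraNneq ef => xy; rewrite ee fe xy.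
have rk_xy : rk u x != rk u y by apply: contra xy => /eqP /(rk_inj _ _ _ gux guy) ->.
by case: ltngtP rk_xy => // lt _; apply/orP; [left | right];
  apply/rank_orientationP; [exists u, x, y | exists u, y, x].
Qed.

Lemma rank_orientation_le u x y :
  (forall y z, g u y -> g u z -> rk u y = rk u z -> y = z) ->
  g u x -> g u y -> x != y -> rk u x <= rk u y -> D [set u; x] [set u; y].
Proof.
move=> rk_inj gux guy xy le_xy; apply/rank_orientationP; exists u, x, y; split=> //.
by rewrite ltn_neqAle le_xy andbT; apply: contra xy => /eqP /(rk_inj _ _ gux guy) ->.
Qed.

Definition rank_above u x : nat := #|[set y | g u y & rk u x < rk u y]|.

Lemma outdeg_rank_orientation u x :
  g u x -> outdeg (edges g) D [set u; x] <= rank_above u x + rank_above x u.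
Proof.
move=> gux; have ux : u != x by apply: contraTneq gux => ->; rewrite g_irr.
apply: leq_trans (leq_add (leq_imset_card (fun y => [set u; y]) _)
                          (leq_imset_card (fun y => [set x; y]) _)).
apply: leq_trans (leq_card_setU _ _); apply: subset_leq_card; apply/subsetP=> f.
rewrite inE => /andP[_ /rank_orientationP[a [b [c [gab gac eq_ab -> lt_bc]]]]].
have ab : a != b by apply: contraTneq gab => ->; rewrite g_irr.
rewrite inE; case: (set2_eq ab (esym eq_ab)) => [[-> ->] | [-> ->]]; apply/orP; [left | right];
  by apply/imsetP; exists c; rewrite // inE gac.
Qed.

Lemma rank_above_le u x M :
  (forall y z, g u y -> g u z -> rk u y = rk u z -> y = z) ->
  (forall y, g u y -> rk u y <= M) ->
  rank_above u x <= M - rk u x.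
Proof.
move=> rk_inj rk_le.
rewrite /rank_above cardE -(size_map (rk u)) -(size_iota (rk u x).+1 (M - rk u x)).
apply: uniq_leq_size => [|n /mapP[y]]; last first.
  rewrite mem_enum inE mem_iota => /andP[guy lt] ->.
  by have := rk_le y guy; lia.
rewrite map_inj_in_uniq ?enum_uniq // => y z.
by rewrite !mem_enum !inE => /andP[guy _] /andP[guz _]; exact: rk_inj.
Qed.

Lemma rank_sink (W : {set {set T}}) u x :
  (forall y, [set u; y] \in W -> rk u y <= rk u x) ->
  (forall y, [set x; y] \in W -> rk x y <= rk x u) ->
  forall f, f \in W -> ~~ D [set u; x] f.
Proof.
move=> top_u top_x f fW; apply/negP => /rank_orientationP[a [b [c [gab _ eq_ab ef lt_bc]]]].
have ab : a != b by apply: contraTneq gab => ->; rewrite g_irr.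
rewrite ef in fW; case: (set2_eq ab (esym eq_ab)) => [[au bx] | [ax bu]]; subst.
- by have := top_u c fW; rewrite leqNgt lt_bc.
- by have := top_x c fW; rewrite leqNgt lt_bc.
Qed.

Lemma exists_rank_top (W : {set {set T}}) u x :
  [set u; x] \in W ->
  exists a, [set u; a] \in W /\ forall y, [set u; y] \in W -> rk u y <= rk u a.
Proof.
by move=> Wux; case: (@arg_maxnP _ x (fun a => [set u; a] \in W) (rk u) Wux) => a; exists a.
Qed.

End RankOrientation.

Lemma uniform_rank_sink (T : finType) (g : rel T) (rho : T -> nat) (W : {set {set T}}) :
  symmetric g -> irreflexive g -> W != set0 ->
  exists2 e, e \in W & forall f, f \in W -> ~~ rank_orientation g (fun=> rho) e f.
Proof.
move=> g_sym g_irr /set0Pn[e0 We0].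
(* Arcs strictly increase the total rank of the endpoints of an edge. *)
pose weight (e : {set T}) := \sum_(z in e) rho z.
have weight2 u x : u != x -> weight [set u; x] = rho u + rho x.
  by move=> ux; rewrite /weight big_setU1 ?inE // big_set1.
case: (arg_maxnP weight We0) => e We top; exists e => // f Wf.
apply/negP => /(rank_orientationP g_sym g_irr)[u [x [y [gux guy ee ef lt_xy]]]].
have ne u' z : g u' z -> u' != z by move=> gz; apply: contraTneq gz => ->; rewrite g_irr.
have := top f Wf; rewrite ee ef !weight2 ?ne //; lia.
Qed.

Section Join.
Variable k : nat.
Local Notation V := 'I_(k + 2).
Local Notation g := (K2_join_Kbar k).

Definition hub0 : V := Ordinal (ltn_addl k (isT : 0 < 2)).
Definition hub1 : V := Ordinal (ltn_addl k (isT : 1 < 2)).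

Lemma join_sym : symmetric g.
Proof. by move=> x y; rewrite /K2_join_Kbar eq_sym orbC. Qed.

Lemma join_irr : irreflexive g.
Proof. by move=> x; rewrite /K2_join_Kbar eqxx. Qed.

Lemma join_hubP (h : V) : h < 2 -> h = hub0 \/ h = hub1.
Proof. by case: h => [[|[|m]] lt_m] // _; [left | right]; apply: val_inj. Qed.

Lemma join_hub_adj (h x : V) : h < 2 -> g h x = (h != x).
Proof. by rewrite /K2_join_Kbar => ->; rewrite andbT. Qed.

Lemma join_leaf_adj (x y : V) : 1 < x -> g x y = (y < 2).
Proof.
move=> x1; rewrite /K2_join_Kbar (ltnNge x) x1 /=.
case: ltnP => y2; rewrite ?andbF // andbT.
by apply: contraTneq y2 => <-; rewrite -ltnNge.
Qed.

Lemma join_other_hub (h h' y : V) : h < 2 -> h' < 2 -> h != h' -> y < 2 -> y != h -> y = h'.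
Proof.
by case/join_hubP=> ->; case/join_hubP=> ->; rewrite ?eqxx // => _; case/join_hubP=> ->;
  rewrite ?eqxx.
Qed.

Lemma join_hub_adj_leaf (h h' x : V) :
  h < 2 -> h' < 2 -> h != h' -> g h x -> x != h' -> 1 < x.
Proof.
move=> h2 h'2 hh' ghx xh'; rewrite ltnNge; apply/negP=> x2.
have xh : x != h by rewrite eq_sym -join_hub_adj.
by rewrite (join_other_hub h2 h'2 hh' x2 xh) eqxx in xh'.
Qed.

Lemma join_edge_hub e :
  e \in edges g -> exists (h x : V), [/\ h < 2, g h x & e = [set h; x]].
Proof.
rewrite inE => /existsP[x /existsP[y /andP[gxy /eqP->]]].
case/andP: (gxy) => _ /orP[x2 | y2]; first by exists x, y.
by exists y, x; rewrite join_sym setUC.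
Qed.

Lemma deg_hub (h : V) : h < 2 -> deg g h = k + 1.
Proof.
move=> h2; rewrite /deg; have -> : [set x | g h x] = [set~ h].
  by apply/setP=> x; rewrite !inE join_hub_adj // eq_sym.
by rewrite cardsC1 card_ord addn2 addn1.
Qed.

Lemma deg_leaf (x : V) : 1 < x -> deg g x = 2.
Proof.
move=> x2; rewrite /deg; have -> : [set y | g x y] = [set hub0; hub1].
  by apply/setP=> y; rewrite !inE join_leaf_adj // -!val_eqE /=; lia.
by rewrite cards2.
Qed.

Lemma maxdeg_join : k + 1 <= maxdeg g.
Proof. by rewrite -(@deg_hub hub0) //; apply: leq_bigmax. Qed.

Section LeafOrientation.
Variable w : V.
Hypothesis w_leaf : 1 < w.

(* The leaves other than w, numbered 2, ..., k. *)
Definition leaf_pos (x : V) : nat := x - (w < x).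

(* At both hubs w ranks first and the other hub second, the remaining leaves
   follow in order of position at hub0 and in reverse order at hub1; a leaf
   ranks hub0 above hub1 unless its position is k.  This balancing keeps both
   edges of a leaf x != w within out-degree maxn 3 k. *)
Definition join_rank (u x : V) : nat :=
  if u < 2 then
    if x == w then k + 2 else if x < 2 then k + 1
    else if u == hub0 then leaf_pos x else k + 2 - leaf_pos x
  else x == (if leaf_pos u < k then hub0 else hub1).

Local Notation rk := join_rank.

Lemma leaf_pos_bounds (x : V) : 1 < x -> x != w -> 2 <= leaf_pos x <= k.
Proof.
move=> x1 xw; rewrite /leaf_pos; have := ltn_ord x.
by move: xw; rewrite -val_eqE; case: (ltnP w x) => /= ? ? ?; have := ltn_ord w; lia.
Qed.

Lemma join_rank_w (h : V) : h < 2 -> rk h w = k + 2.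
Proof. by rewrite /rk => ->; rewrite eqxx. Qed.

Lemma join_rank_hubs (h h' : V) : h < 2 -> h' < 2 -> rk h h' = k + 1.
Proof.
by rewrite /rk => -> h'2; rewrite h'2 ifF //; apply: contraTF h'2 => /eqP->; rewrite -leqNgt.
Qed.

Lemma join_rank_leaf (h x : V) : h < 2 -> 1 < x -> x != w ->
  rk h x = if h == hub0 then leaf_pos x else k + 2 - leaf_pos x.
Proof. by rewrite /rk => -> x2 /negbTE->; rewrite (ltnNge x) x2. Qed.

Lemma join_rank_le (h x : V) : h < 2 -> rk h x <= k + 2.
Proof.
move=> h2; have [x2 | x1] := ltnP x 2; first by rewrite join_rank_hubs // leq_add2l.
have [-> | xw] := eqVneq x w; first by rewrite join_rank_w.
rewrite join_rank_leaf //; have := leaf_pos_bounds x1 xw; case: ifP; lia.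
Qed.

Lemma join_rank_ge (h x : V) : h < 2 -> k + 1 <= rk h x -> x < 2 \/ x = w.
Proof.
move=> h2; have [x2 | x1] := ltnP x 2; first by left.
have [-> | xw] := eqVneq x w; first by right.
rewrite join_rank_leaf //; have := leaf_pos_bounds x1 xw; case: ifP; lia.
Qed.

Lemma join_rank_leaf_hub0 (x : V) : 1 < x -> rk x hub0 = (leaf_pos x < k).
Proof. by move=> x1; rewrite /rk (ltnNge x) x1 /=; case: ifP. Qed.

Lemma join_rank_leaf_hub1 (x : V) : 1 < x -> rk x hub1 = (k <= leaf_pos x).
Proof. by move=> x1; rewrite /rk (ltnNge x) x1 /=; case: ltnP. Qed.

Lemma join_rank_leaf_le (x y : V) : 1 < x -> rk x y <= 1.
Proof. by move=> x1; rewrite /rk (ltnNge x) x1 /=; case: (y == _). Qed.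

Lemma join_rank_leaf_hubs (x : V) : 1 < x -> rk x hub0 + rk x hub1 = 1.
Proof.
by move=> x1; rewrite join_rank_leaf_hub0 // join_rank_leaf_hub1 //; case: ltnP.
Qed.

Lemma join_rank_inj u y z : g u y -> g u z -> rk u y = rk u z -> y = z.
Proof.
have [u2 | u1] := ltnP u 2; last first.
  rewrite !join_leaf_adj // => y2 z2.
  by case/join_hubP: y2 => ->; case/join_hubP: z2 => ->; rewrite /rk (ltnNge u) u1 /=; case: ifP.
rewrite !join_hub_adj // /rk u2 /leaf_pos => uy uz eq_rk; apply/val_inj.
move: uy uz eq_rk; have := ltn_ord y; have := ltn_ord z; have := ltn_ord w.
rewrite -!val_eqE /=; by repeat case: ifP; lia.
Qed.

Local Notation D := (rank_orientation g rk).

Lemma join_rank_above_hub (h x : V) : h < 2 -> rank_above g rk h x <= k + 2 - rk h x.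
Proof.
by move=> h2; apply: rank_above_le => [|y _]; [exact: join_rank_inj | exact: join_rank_le].
Qed.

Lemma join_rank_above_leaf (x h : V) : 1 < x -> rank_above g rk x h <= 1 - rk x h.
Proof.
by move=> x1; apply: rank_above_le => [|y _]; [exact: join_rank_inj | exact: join_rank_leaf_le].
Qed.

Lemma join_outdeg e :
  e \in edges g -> outdeg (edges g) D e <= (if w \in e then 1 else maxn 3 k).
Proof.
case/join_edge_hub=> h [x [h2 ghx ->]].
apply: leq_trans (outdeg_rank_orientation join_sym join_irr rk ghx) _.
have above_h := join_rank_above_hub x h2.
have [x2 | x1] := ltnP x 2.
  have above_x := join_rank_above_hub h x2.
  rewrite !join_rank_hubs // in above_h above_x.
  by rewrite ifF; [lia | apply/negbTE; rewrite !inE -!val_eqE /=; lia].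
have above_x := join_rank_above_leaf h x1.
have [xw | xw] := eqVneq x w.
  by subst x; rewrite join_rank_w // in above_h; rewrite set22; lia.
rewrite ifF; last by apply/negbTE; rewrite !inE negb_or (eq_sym w x) xw andbT -val_eqE /=; lia.
rewrite join_rank_leaf // in above_h.
have := leaf_pos_bounds x1 xw.
case/join_hubP: h2 above_h above_x => ->;
  rewrite ?join_rank_leaf_hub0 ?join_rank_leaf_hub1 //=; case: ltnP; lia.
Qed.

Section Kernel.
Variable W : {set {set V}}.
Hypothesis W_edges : W \subset edges g.

Lemma W_adj (x y : V) : [set x; y] \in W -> g x y.
Proof. by move=> Wxy; rewrite -(edges_set2 join_sym join_irr) (subsetP W_edges). Qed.

Lemma leaf_top_sink (h a : V) :
  (forall y, [set h; y] \in W -> rk h y <= rk h a) -> 1 < a -> rk a h = 1 ->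
  forall f, f \in W -> ~~ D [set h; a] f.
Proof.
move=> top_a a1 rk_ah; apply: (rank_sink join_sym join_irr top_a) => y _.
by rewrite rk_ah join_rank_leaf_le.
Qed.

Lemma hub_top_alone_sink (h h' a : V) :
  h < 2 -> h' < 2 -> h != h' -> [set h; a] \in W ->
  (forall y, [set h; y] \in W -> rk h y <= rk h a) ->
  (forall y, [set h'; y] \notin W) ->
  forall f, f \in W -> ~~ D [set h; a] f.
Proof.
move=> h2 h'2 hh' Wa top_a noh'.
have gha := W_adj Wa; have ah : a != h by rewrite eq_sym -join_hub_adj.
have a1 : 1 < a.
  rewrite ltnNge; apply/negP => a2; have ah' := join_other_hub h2 h'2 hh' a2 ah.
  by have := noh' h; rewrite setUC -ah' Wa.
apply: (rank_sink join_sym join_irr top_a) => y Way.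
have y2 : y < 2 by rewrite -(join_leaf_adj _ a1) W_adj.
have yh' : y != h' by apply: contraNneq (noh' a) => <-; rewrite setUC.
by rewrite (join_other_hub h'2 h2 _ y2 yh') // eq_sym.
Qed.

Lemma hub_edge_top_sink (h h' b : V) :
  h < 2 -> h' < 2 -> h != h' ->
  [set h; h'] \in W -> (forall y, [set h; y] \in W -> rk h y <= rk h h') ->
  [set h'; b] \in W -> (forall y, [set h'; y] \in W -> rk h' y <= rk h' b) -> b != h ->
  forall f, f \in W -> ~~ D [set h'; b] f.
Proof.
move=> h2 h'2 hh' Whh' top_h' Wb top_b bh.
have bw : b = w.
  have ge_b : k + 1 <= rk h' b by rewrite -(join_rank_hubs h'2 h2) top_b // setUC.
  case: (join_rank_ge h'2 ge_b) => // b2.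
  have h'b : h' != b by rewrite -join_hub_adj // W_adj.
  by rewrite (join_other_hub h2 h'2 hh' b2 bh) eqxx in h'b.
rewrite bw in Wb top_b *; apply: (rank_sink join_sym join_irr top_b) => y Wwy.
have [-> // | yh'] := eqVneq y h'.
have y2 : y < 2 by rewrite -(join_leaf_adj _ w_leaf) W_adj.
have yh : y = h by rewrite (join_other_hub h'2 h2 _ y2 yh') // eq_sym.
have Whw : [set h; w] \in W by rewrite setUC -yh.
by have := top_h' w Whw; rewrite join_rank_w // join_rank_hubs //; lia.
Qed.

Lemma hub_tops_kernel (a b : V) :
  1 < a -> 1 < b -> a != b ->
  [set hub0; a] \in W -> (forall y, [set hub0; y] \in W -> rk hub0 y <= rk hub0 a) ->
  [set hub1; b] \in W -> (forall y, [set hub1; y] \in W -> rk hub1 y <= rk hub1 b) ->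
  is_kernel D W [set [set hub0; a]; [set hub1; b]].
Proof.
move=> a1 b1 ab Wa top_a Wb top_b.
split; first by apply/subsetP=> e /set2P[]->.
split=> [e f | e We].
  have disj : [disjoint [set hub0; a] & [set hub1; b]].
    apply/pred0P=> u; rewrite /= !inE; apply/negbTE; move: ab; rewrite -!val_eqE /=; lia.
  move=> /set2P[]-> /set2P[]->; rewrite ?(rank_orientation_irr join_sym join_irr) //;
    apply/negP=> /(rank_orientation_meet join_sym join_irr)[u ue uf].
  - by rewrite (disjointFr disj ue) in uf.
  - by rewrite (disjointFr disj uf) in ue.
rewrite !inE negb_or => /andP[ea eb].
have [h [x [h2 ghx ex]]] := join_edge_hub (subsetP W_edges e We).
rewrite ex in We ea eb *.
case/join_hubP: h2 => eh; subst h; [exists [set hub0; a] | exists [set hub1; b]];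
  rewrite ?inE ?eqxx ?orbT //; apply: (rank_orientation_le join_sym join_irr);
  rewrite ?(W_adj Wa) ?(W_adj Wb) ?top_a ?top_b //; try exact: join_rank_inj.
- by apply: contraNneq ea => ->.
- by apply: contraNneq eb => ->.
Qed.

Lemma join_sink_or_kernel :
  W != set0 ->
  (exists2 e, e \in W & forall f, f \in W -> ~~ D e f) \/ exists S, is_kernel D W S.
Proof.
move=> /set0Pn[e We].
have hub01 : hub0 != hub1 by [].
case: (boolP [exists x, [set hub0; x] \in W]) => [/existsP[x0 Wx0] | /existsPn noA];
  case: (boolP [exists x, [set hub1; x] \in W]) => [/existsP[y0 Wy0] | /existsPn noB].
- have [a [Wa top_a]] := exists_rank_top rk Wx0.
  have [b [Wb top_b]] := exists_rank_top rk Wy0.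
  have [ah1 | ah1] := eqVneq a hub1; have [bh0 | bh0] := eqVneq b hub0.
  + subst a b; left; exists [set hub0; hub1] => //.
    exact: (rank_sink join_sym join_irr top_a top_b).
  + subst a; left; exists [set hub1; b] => //; exact: (hub_edge_top_sink _ _ hub01).
  + subst b; left; exists [set hub0; a] => //.
    by apply: (hub_edge_top_sink _ _ _ Wb top_b Wa top_a ah1); rewrite // eq_sym.
  have a1 : 1 < a by apply: (@join_hub_adj_leaf hub0 hub1) (W_adj Wa) ah1.
  have b1 : 1 < b by apply: (@join_hub_adj_leaf hub1 hub0) (W_adj Wb) bh0.
  have [eab | ab] := eqVneq a b; last first.
    by right; eexists; exact: hub_tops_kernel a1 b1 ab Wa top_a Wb top_b.
  subst b.
  left; have : rk a hub0 = 1 \/ rk a hub1 = 1 by have := join_rank_leaf_hubs a1; lia.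
  by case=> rk1; [exists [set hub0; a] | exists [set hub1; a]]; rewrite //; exact: leaf_top_sink.
- have [a [Wa top_a]] := exists_rank_top rk Wx0.
  by left; exists [set hub0; a] => //; apply: (hub_top_alone_sink _ _ hub01 Wa top_a noB).
- have [b [Wb top_b]] := exists_rank_top rk Wy0.
  by left; exists [set hub1; b] => //; apply: (hub_top_alone_sink _ _ _ Wb top_b noA).
have [h [x [h2 _ ex]]] := join_edge_hub (subsetP W_edges e We).
rewrite ex in We; case/join_hubP: h2 We => ->; by rewrite ?(negbTE (noA x)) ?(negbTE (noB x)).
Qed.

End Kernel.

Lemma join_leaf_orientable p : 4 <= p -> k + 1 <= p -> f_edge_orientable g (f_pv g p w).
Proof.
move=> p4 pk; exists D; split.
- exact: (rank_orientation_of join_sym join_irr join_rank_inj).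
- apply: (kernel_perfect_of_sink_or_kernel (rank_orientation_irr join_sym join_irr _)).
  exact: join_sink_or_kernel.
- move=> e eE; rewrite /f_pv deg_leaf //; have := join_outdeg eE.
  by case: (w \in e); lia.
Qed.

End LeafOrientation.
End Join.

Arguments join_sym {k}.
Arguments join_irr {k}.

Section Triangle.
Local Notation g := (K2_join_Kbar 1).
Variable v : 'I_(1 + 2).
Hypothesis v_hub : v < 2.

Definition triangle_rank (x : 'I_(1 + 2)) : nat :=
  if x == v then 2 else if x < 2 then 1 else 0.

Local Notation rho := triangle_rank.
Local Notation D := (rank_orientation g (fun=> rho)).

Lemma triangle_rank_inj : injective rho.
Proof.
move=> x y eq_rho; apply/val_inj; move: eq_rho v_hub (ltn_ord x) (ltn_ord y).
by rewrite /rho -!val_eqE /=; repeat case: ifP; lia.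
Qed.

Lemma triangle_rank_above u x :
  rank_above g (fun=> rho) u x <= (if u == v then 1 else 2) - rho x.
Proof.
apply: rank_above_le => [y z _ _ | y]; first exact: triangle_rank_inj.
have [-> | _] := eqVneq u v; last by rewrite /rho; case: ifP => //; case: ifP.
by rewrite (join_hub_adj _ v_hub) eq_sym /rho => /negbTE->; case: ifP.
Qed.

Lemma triangle_outdeg e :
  e \in edges g -> outdeg (edges g) D e <= (if v \in e then 1 else 3).
Proof.
move=> eE; case: ifPn => [ve | ve].
  have [x gvx ->] := edges_at join_sym eE ve.
  apply: leq_trans (outdeg_rank_orientation join_sym join_irr _ gvx) _.
  have := triangle_rank_above v x; have := triangle_rank_above x v.
  by rewrite eqxx {2}/rho eqxx; case: (x == v); lia.
have [h [x [h2 ghx ex]]] := join_edge_hub eE.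
rewrite ex in ve *; apply: leq_trans (outdeg_rank_orientation join_sym join_irr _ ghx) _.
have := triangle_rank_above h x; have := triangle_rank_above x h.
have hv : (h == v) = false by apply/negbTE; apply: contraNneq ve => <-; rewrite set21.
have rho_h : rho h = 1 by rewrite /rho hv h2.
by rewrite hv rho_h; case: (x == v); lia.
Qed.

Lemma triangle_hub_orientable p : 4 <= p -> f_edge_orientable g (f_pv g p v).
Proof.
move=> p4; exists D; split.
- apply: (rank_orientation_of join_sym join_irr) => u y z _ _; exact: triangle_rank_inj.
- apply: (kernel_perfect_of_sink_or_kernel (rank_orientation_irr join_sym join_irr _)).
  by move=> W _ nzW; left; exact: uniform_rank_sink join_sym join_irr nzW.
- move=> e eE; rewrite /f_pv deg_hub //; have := triangle_outdeg eE.
  by case: (v \in e); lia.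
Qed.

End Triangle.

Theorem mainTheorem17 (k : nat) (hk : 1 <= k) (v : 'I_(k + 2))
    (hv : deg (K2_join_Kbar k) v = 2) (p : nat)
    (hp : maxn 4 (maxdeg (K2_join_Kbar k)) <= p) :
  f_edge_orientable (K2_join_Kbar k) (f_pv (K2_join_Kbar k) p v).
Proof.
have := maxdeg_join k; rewrite geq_max in hp; case/andP: hp => p4 pmax deg_le.
have [v_leaf | v_hub] := ltnP 1 v.
  by apply: join_leaf_orientable; last exact: leq_trans deg_le pmax.
have k1 : k = 1 by move: hv; rewrite deg_hub //; lia.
by subst k; exact: triangle_hub_orientable.
Qed.
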